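(* Let $G$ be a simple graph, $k\ge 1$, and let $D$ be a $k$-optimal set in $G$. Then $G$ has a subgraph $M$ of maximum degree at most $k$ such that $d_M(v) = k$ for all $v \in V(G)-D$.
   Context: A vertex set $D$ is $k$-dependent if $G[D]$ has maximum degree at most $k-1$. For $D\subseteq V(G)$, $\phi_k(D)=k|D|-|E(G[D])|$ and $\phi_k(G)=\max_{D\subseteq V(G)}\phi_k(D)$. A $k$-optimal set is a $k$-dependent set $D$ with $\phi_k(D)=\phi_k(G)$. $d_M(v)$ is the degree of $v$ in $M$. *)

From mathcomp Require Import all_boot all_order all_algebra.
Set Implicit Arguments. Unset Strict Implicit. Unset Printing Implicit Defensive.
Import GRing.Theory Num.Theory.

Definition simple_graph (V : finType) (e : rel V) : Prop :=
  symmetric e /\ irreflexive e.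

Definition deg_in (V : finType) (e : rel V) (D : {set V}) (v : V) : nat :=
  #|[set u in D | e v u]|.

Definition deg (V : finType) (e : rel V) (v : V) : nat :=
  #|[set u | e v u]|.

Definition induced_edges (V : finType) (e : rel V) (D : {set V}) : {set {set V}} :=
  [set E : {set V} | E \subset D &
     [exists x : V, exists y : V, e x y && (E == [set x; y])]].

Definition phi (V : finType) (e : rel V) (k : nat) (D : {set V}) : int :=
  (k * #|D|)%:Z - (#|induced_edges e D|)%:Z.

Definition k_dependent (V : finType) (e : rel V) (k : nat) (D : {set V}) : Prop :=
  forall v, v \in D -> deg_in e D v <= k.-1.

Definition k_optimal (V : finType) (e : rel V) (k : nat) (D : {set V}) : Prop :=
  k_dependent e k D /\ forall D' : {set V}, (phi e k D' <= phi e k D)%R.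

Definition subgraph (V : finType) (m e : rel V) : Prop :=
  symmetric m /\ subrel m e.

From mathcomp Require Import all_boot all_order all_algebra.
From mathcomp Require Import zify.
Set Implicit Arguments. Unset Strict Implicit. Unset Printing Implicit Defensive.

(* Replace k by a weight f : V -> nat and call D f-optimal when it maximises
   phi_f(X) = f(X) - |E(G[X])|; a subgraph M with d_M <= f, and d_M = f off D,
   is then built by induction on the number of edges.  An edge inside D, or at a
   vertex of weight 0, can be deleted without affecting optimality.  An edge ab
   can be put into M, decreasing f at a and b, whenever this keeps D optimal:
   this holds if both ends lie outside D, or if every maximiser of phi_f meets
   {a, b}.  In the remaining case every edge joins D to its complement, so phi_f
   is supermodular for the order "inclusion off D, reverse inclusion on D"; for a
   vertex a outside D, the maximiser I avoiding a with |I :&: D| least has a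
   neighbour b of a (as adding a to I does not help), and supermodularity shows
   that every maximiser meets {a, b}.  Without edges, optimality forces f = 0
   off D. *)

Section FactorsOfOptimalSets.

Variable V : finType.
Implicit Types (e m : rel V) (f : V -> nat) (D X Y : {set V}) (a b v : V).

Definition wsum f X : nat := \sum_(x in X) f x.

(* Twice the number of edges of G[X]: each edge is counted in both directions. *)
Definition arcs e X : nat := \sum_(x in X) \sum_(y in X) (e x y : nat).

Lemma sum_pred1_in X b : \sum_(y in X) (y == b : nat) = (b \in X).
Proof.
case bX: (b \in X).
  by rewrite (big_setD1 b bX) eqxx big1 // => y /setD1P[/negbTE-> _].
by rewrite big1 // => y yX; case: eqP => // yb; rewrite -yb yX in bX.
Qed.

Lemma deg_inE e Y v : deg_in e Y v = \sum_(u in Y) (e v u : nat).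
Proof.
rewrite /deg_in -sum1dep_card big_mkcondr /=.
by apply: eq_bigr => u _; case: (e v u).
Qed.

Lemma wsumE f X : wsum f X = \sum_x ((x \in X) * f x).
Proof.
by rewrite /wsum big_mkcond; apply: eq_bigr => x _; case: (x \in X); rewrite ?mul1n.
Qed.

Lemma arcsE e X : arcs e X = \sum_(p : V * V) ([&& p.1 \in X, p.2 \in X & e p.1 p.2] : nat).
Proof.
rewrite /arcs pair_big_dep big_mkcond /=.
by apply: eq_bigr => p _; case: (_ \in X); case: (_ \in X).
Qed.

Lemma wsum_setU1 f v Y : v \notin Y -> wsum f (v |: Y) = f v + wsum f Y.
Proof. exact: big_setU1. Qed.

Lemma wsum_const k X : wsum (fun=> k) X = k * #|X|.
Proof. by rewrite /wsum sum_nat_const mulnC. Qed.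

Lemma arcs_setU1 e v Y : symmetric e -> irreflexive e -> v \notin Y ->
  arcs e (v |: Y) = arcs e Y + 2 * deg_in e Y v.
Proof.
move=> sym irr vY; rewrite /arcs deg_inE big_setU1 //= (big_setU1 _ vY) /= irr add0n.
under [X in _ + X = _]eq_bigr => x _ do rewrite (big_setU1 _ vY) /= sym.
by rewrite big_split /=; lia.
Qed.

Lemma edge_neq e a b : irreflexive e -> e a b -> a != b.
Proof. by move=> irr; apply: contraTneq => ->; rewrite irr. Qed.

Definition decr f a : V -> nat := fun x => f x - (x == a).

Lemma wsum_decr f a X : 0 < f a -> wsum f X = wsum (decr f a) X + (a \in X).
Proof.
move=> fa; rewrite /wsum /decr; case aX: (a \in X).
  rewrite !(big_setD1 a aX) /= eqxx.
  have -> : \sum_(x in X :\ a) (f x - (x == a)) = \sum_(x in X :\ a) f x.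
    by apply: eq_bigr => x /setD1P[/negbTE-> _]; rewrite subn0.
  lia.
rewrite addn0; apply: eq_bigr => x xX; case: eqP => [xa|]; last by rewrite subn0.
by rewrite -xa xX in aX.
Qed.

Definition del_edge e a b : rel V :=
  fun x y => e x y && ~~ ((x == a) && (y == b) || (x == b) && (y == a)).

Lemma del_edge_sym e a b : symmetric e -> symmetric (del_edge e a b).
Proof.
by move=> sym x y; rewrite /del_edge sym [(y == a) && _]andbC [(y == b) && _]andbC orbC.
Qed.

Lemma del_edge_irr e a b : irreflexive e -> irreflexive (del_edge e a b).
Proof. by move=> irr x; rewrite /del_edge irr. Qed.

Lemma del_edge_sub e a b : subrel (del_edge e a b) e.
Proof. by move=> x y /andP[]. Qed.

Lemma del_edge_deleted e a b : del_edge e a b a b = false.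
Proof. by rewrite /del_edge !eqxx andbF. Qed.

Lemma arcs_del_edge e a b X : symmetric e -> e a b -> a != b ->
  arcs e X = arcs (del_edge e a b) X + 2 * ((a \in X) && (b \in X)).
Proof.
move=> sym eab ab.
have split_arc x y : (e x y : nat) =
    del_edge e a b x y + (x == a) * (y == b) + (x == b) * (y == a).
  have eP : (x == a) && (y == b) -> e x y by case/andP => /eqP-> /eqP->.
  have eQ : (x == b) && (y == a) -> e x y by case/andP => /eqP-> /eqP->; rewrite sym.
  have nPQ : ~~ (((x == a) && (y == b)) && ((x == b) && (y == a))).
    by apply: contra ab => /andP[/andP[/eqP<- _] /andP[/eqP<- _]].
  rewrite /del_edge !mulnb; move: eP eQ nPQ.
  move: ((x == a) && (y == b)) ((x == b) && (y == a)) => p q.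
  by move=> /implyP + /implyP; case: p; case: q; case: (e x y).
rewrite /arcs; under eq_bigr => x _ do
  rewrite (eq_bigr _ (fun y _ => split_arc x y)) !big_split -!big_distrr /= !sum_pred1_in.
by rewrite !big_split -!big_distrl /= !sum_pred1_in -mulnb; lia.
Qed.

Lemma arcs_induced_edges e X : symmetric e -> irreflexive e ->
  arcs e X = 2 * #|induced_edges e X|.
Proof.
move=> sym irr.
pose P := [set p : V * V | [&& p.1 \in X, p.2 \in X & e p.1 p.2]].
have -> : arcs e X = #|P|.
  by rewrite arcsE -sum1dep_card [RHS]big_mkcond; apply: eq_bigr => p _; case: (_ && _).
rewrite -sum1_card (partition_big (fun p : V * V => [set p.1; p.2])
                                  (fun E => E \in induced_edges e X)); last first.
  move=> [x y]; rewrite !inE /= => /and3P[xX yX exy].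
  rewrite subUset !sub1set xX yX /=.
  by apply/existsP; exists x; apply/existsP; exists y; rewrite exy eqxx.
rewrite mulnC -sum_nat_const; apply: eq_bigr => E.
rewrite inE => /andP[sEX /existsP[x /existsP[y /andP[exy /eqP defE]]]].
have xy := edge_neq irr exy.
have xX : x \in X by apply: (subsetP sEX); rewrite defE set21.
have yX : y \in X by apply: (subsetP sEX); rewrite defE set22.
rewrite sum1dep_card.
have -> : [set p in P | [set p.1; p.2] == E] = [set (x, y); (y, x)].
  apply/setP => [[p q]]; rewrite !inE /= defE !xpair_eqE.
  apply/idP/idP.
  - move=> /andP[/and3P[_ _ epq] /eqP pqE].
    have pq := edge_neq irr epq.
    have : p \in [set x; y] by rewrite -pqE set21.
    have : q \in [set x; y] by rewrite -pqE set22.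
    rewrite !inE => /orP[]/eqP qE /orP[]/eqP pE;
      by move: pq; rewrite pE qE ?eqxx ?andbT ?orbT.
  - case/orP=> /andP[/eqP-> /eqP->]; rewrite xX yX ?exy ?(sym y x) ?exy //=.
    by rewrite setUC.
by rewrite cards2 xpair_eqE negb_and xy.
Qed.

(* [2 * wsum f X - arcs e X] is twice phi_f(X) = f(X) - |E(G[X])|; the sums
   are kept on the two sides to avoid truncated subtraction. *)
Definition f_optimal e f D : Prop :=
  forall X, 2 * wsum f X + arcs e D <= 2 * wsum f D + arcs e X.

Definition f_tight e f D X : bool :=
  2 * wsum f X + arcs e D == 2 * wsum f D + arcs e X.

Definition has_fmatching_saturating e f D : Prop :=
  exists m : rel V, [/\ symmetric m, subrel m e, forall v, deg m v <= f v &
                        forall v, v \notin D -> deg m v = f v].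

Lemma f_optimal_tight e f D X : f_optimal e f D -> f_tight e f D X -> f_optimal e f X.
Proof. by move=> opt /eqP tX Y; have := opt Y; lia. Qed.

Lemma f_optimal_deg_in e f D v : symmetric e -> irreflexive e ->
  f_optimal e f D -> v \notin D -> f v <= deg_in e D v.
Proof.
by move=> sym irr opt vD; have := opt (v |: D); rewrite wsum_setU1 // arcs_setU1 //; lia.
Qed.

Lemma f_optimal_del_edge_in e f D a b : symmetric e -> irreflexive e ->
  e a b -> a \in D -> b \in D -> f_optimal e f D -> f_optimal (del_edge e a b) f D.
Proof.
move=> sym irr eab aD bD opt X; have ab := edge_neq irr eab.
have := opt X; rewrite (arcs_del_edge D sym eab ab) (arcs_del_edge X sym eab ab) aD bD.
by case: ((a \in X) && _); lia.
Qed.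

Lemma f_optimal_del_edge_zero e f D a b : symmetric e -> irreflexive e ->
  e a b -> f a = 0 -> ~~ ((a \in D) && (b \in D)) ->
  f_optimal e f D -> f_optimal (del_edge e a b) f D.
Proof.
move=> sym irr eab fa0 abD opt X; have ab := edge_neq irr eab.
have := opt X; rewrite (arcs_del_edge D sym eab ab) (arcs_del_edge X sym eab ab) (negbTE abD).
case abX: ((a \in X) && (b \in X)); [move/andP: abX => [aX bX] | lia].
(* Compare with X :\ a, which loses the weight-0 vertex a and the edge ab. *)
have aXa : a \notin X :\ a by rewrite !inE eqxx.
have defX : X = a |: (X :\ a) by rewrite setD1K.
have wX : wsum f X = wsum f (X :\ a) by rewrite {1}defX wsum_setU1 // fa0.
have aX1 : arcs e X = arcs e (X :\ a) + 2 * deg_in e (X :\ a) a.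
  by rewrite {1}defX arcs_setU1.
have : 0 < deg_in e (X :\ a) a.
  by rewrite card_gt0; apply/set0Pn; exists b; rewrite !inE eab bX eq_sym ab.
have := opt (X :\ a); rewrite (arcs_del_edge D sym eab ab) (negbTE abD).
rewrite (arcs_del_edge X sym eab ab) aX bX in aX1; lia.
Qed.

Lemma f_optimal_use_edge e f D a b : symmetric e -> irreflexive e -> e a b ->
  0 < f a -> 0 < f b -> a \notin D ->
  (b \in D -> forall X, f_tight e f D X -> (a \in X) || (b \in X)) ->
  f_optimal e f D -> f_optimal (del_edge e a b) (decr (decr f a) b) D.
Proof.
move=> sym irr eab fa fb aD cover opt X; have ab := edge_neq irr eab.
have fb' : 0 < decr f a b by rewrite /decr eq_sym (negbTE ab) subn0.
have wsum_ab Y : wsum f Y = wsum (decr (decr f a) b) Y + (a \in Y) + (b \in Y).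
  by rewrite (wsum_decr Y fa) (wsum_decr Y fb') addnAC.
have [del_sym del_irr] := (del_edge_sym a b sym, del_edge_irr a b irr).
have loose : b \in D -> a \notin X -> b \notin X -> ~~ f_tight e f D X.
  by move=> bD aX bX; apply/negP => /(cover bD X); rewrite (negbTE aX) (negbTE bX).
move: (opt X) (wsum_ab X) (wsum_ab D).
move: (arcs_del_edge X sym eab ab) (arcs_del_edge D sym eab ab).
(* Both sides of the optimality inequality are even, so a set that is not
   tight loses by at least 2; this absorbs the edge ab when X misses a and b. *)
move: (arcs_induced_edges X del_sym del_irr) (arcs_induced_edges D del_sym del_irr).
rewrite (negbTE aD); case bD: (b \in D); case aX: (a \in X); case bX: (b \in X) => /=; try lia.
by have /eqP := loose bD (negbT aX) (negbT bX); lia.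
Qed.

Definition add_edge m a b : rel V :=
  fun x y => [|| m x y, (x == a) && (y == b) | (x == b) && (y == a)].

Lemma deg_add_edge m a b v : symmetric m -> ~~ m a b -> a != b ->
  deg (add_edge m a b) v = deg m v + (v == a) + (v == b).
Proof.
move=> sym mab ab; rewrite /deg.
have [->|va] := eqVneq v a.
  have -> : [set u | add_edge m a b a u] = b |: [set u | m a u].
    by apply/setP => u; rewrite /add_edge !inE eqxx (negbTE ab) orbF orbC.
  by rewrite cardsU1 inE (negbTE mab) (negbTE ab) addn0 addnC.
have [->|vb] := eqVneq v b.
  have -> : [set u | add_edge m a b b u] = a |: [set u | m b u].
    by apply/setP => u; rewrite /add_edge !inE eqxx eq_sym (negbTE ab) /= orbC.
  by rewrite cardsU1 inE sym (negbTE mab) addn0 addnC.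
have -> : [set u | add_edge m a b v u] = [set u | m v u].
  by apply/setP => u; rewrite /add_edge !inE (negbTE va) (negbTE vb) !orbF.
by rewrite !addn0.
Qed.

Lemma fmatching_del_edge e f D a b :
  has_fmatching_saturating (del_edge e a b) f D -> has_fmatching_saturating e f D.
Proof.
move=> [m [sym sub le_f eq_f]]; exists m; split=> // x y /sub.
exact: del_edge_sub.
Qed.

Lemma fmatching_use_edge e f D a b : symmetric e -> irreflexive e -> e a b ->
  0 < f a -> 0 < f b ->
  has_fmatching_saturating (del_edge e a b) (decr (decr f a) b) D ->
  has_fmatching_saturating e f D.
Proof.
move=> sym irr eab fa fb [m [msym sub le_f eq_f]]; have ab := edge_neq irr eab.
have mab : ~~ m a b by apply/negP => /sub; rewrite del_edge_deleted.
have decrE v : f v = decr (decr f a) b v + (v == a) + (v == b).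
  rewrite /decr; have [->|va] := eqVneq v a; first by rewrite (negbTE ab) /=; lia.
  by have [->|vb] := eqVneq v b; rewrite ?(negbTE va) /=; lia.
exists (add_edge m a b); split.
- move=> x y; rewrite /add_edge msym [(y == a) && _]andbC [(y == b) && _]andbC.
  by rewrite orbA orbAC -orbA.
- move=> x y /or3P[/sub/del_edge_sub // | /andP[/eqP-> /eqP->] | /andP[/eqP-> /eqP->]] //.
  by rewrite sym.
- by move=> v; rewrite deg_add_edge // [f v]decrE leq_add2r leq_add2r.
- by move=> v vD; rewrite deg_add_edge // [f v]decrE eq_f.
Qed.

Lemma fmatching_no_edges e f D : symmetric e -> irreflexive e ->
  (forall x y, ~~ e x y) -> f_optimal e f D -> has_fmatching_saturating e f D.
Proof.
move=> sym irr noE opt; exists (fun _ _ => false).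
have deg0 v : deg (fun _ _ : V => false) v = 0 by apply/eqP; rewrite cards_eq0; apply/eqP/setP.
split=> // [v | v vD]; rewrite deg0 //.
have := f_optimal_deg_in sym irr opt vD.
by rewrite deg_inE big1 ?leqn0 => [/eqP|u _]; rewrite ?(negbTE (noE v u)).
Qed.

Definition edges_cross e D : Prop := forall x y, e x y -> (x \in D) != (y \in D).

(* Join and meet for the order on sets that is inclusion outside [D] and
   reverse inclusion inside [D]. *)
Definition tjoin D I X : {set V} := ((I :|: X) :\: D) :|: (I :&: X :&: D).
Definition tmeet D I X : {set V} := ((I :&: X) :\: D) :|: ((I :|: X) :&: D).

Lemma wsum_tjoin_tmeet f D I X :
  wsum f (tjoin D I X) + wsum f (tmeet D I X) = wsum f I + wsum f X.
Proof.
rewrite !wsumE -!big_split; apply: eq_bigr => x _; rewrite !inE.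
by case: (x \in D); case: (x \in I); case: (x \in X) => /=; lia.
Qed.

Lemma arcs_tjoin_tmeet e D I X : edges_cross e D ->
  arcs e (tjoin D I X) + arcs e (tmeet D I X) <= arcs e I + arcs e X.
Proof.
move=> cross; rewrite !arcsE -!big_split; apply: leq_sum => [[x y]] _ /=.
case exy: (e x y); last by rewrite !andbF.
move: (cross x y exy); rewrite !inE !andbT.
by case: (x \in D); case: (y \in D); case: (x \in I); case: (x \in X);
  case: (y \in I); case: (y \in X).
Qed.

Lemma f_tight_tjoin e f D I X : edges_cross e D -> f_optimal e f D ->
  f_tight e f D I -> f_tight e f D X -> f_tight e f D (tjoin D I X).
Proof.
move=> cross opt /eqP tI /eqP tX; apply/eqP.
have := opt (tjoin D I X); have := opt (tmeet D I X).
have := wsum_tjoin_tmeet f D I X; have := arcs_tjoin_tmeet I X cross; lia.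
Qed.

Lemma tight_sets_meet_edge e f D a : symmetric e -> irreflexive e -> edges_cross e D ->
  f_optimal e f D -> 0 < f a -> a \notin D ->
  exists b, [/\ e a b, b \in D & forall X, f_tight e f D X -> (a \in X) || (b \in X)].
Proof.
move=> sym irr cross opt fa aD.
pose P := [pred I : {set V} | (a \notin I) && f_tight e f D I].
have PD : P D by rewrite /= aD /f_tight eqxx.
case: (arg_minnP (fun I => #|I :&: D|) PD) => I /andP[aI tI] minI.
have : 0 < deg_in e I a.
  by have := f_optimal_deg_in sym irr (f_optimal_tight opt tI) aI; lia.
rewrite card_gt0 => /set0Pn[b]; rewrite inE => /andP[bI eab].
have bD : b \in D by move: (cross a b eab); rewrite (negbTE aD); case: (b \in D).
exists b; split=> // X tX; apply/negPn/negP; rewrite negb_or => /andP[aX bX].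
have aJ : a \notin tjoin D I X by rewrite !inE (negbTE aI) (negbTE aX) (negbTE aD).
have := minI (tjoin D I X); rewrite /= aJ f_tight_tjoin //; move/(_ isT).
suff /proper_card : tjoin D I X :&: D \proper I :&: D by lia.
apply/properP; split; last by exists b; rewrite !inE ?bI ?bD ?(negbTE bX) ?andbF.
by apply/subsetP => x; rewrite !inE; case: (x \in D); case: (x \in I); case: (x \in X).
Qed.

Lemma f_optimal_fmatching e f D : symmetric e -> irreflexive e ->
  f_optimal e f D -> has_fmatching_saturating e f D.
Proof.
have [n] := ubnP (arcs e setT); elim: n e f => // n IH e f lt_n sym irr opt.
case: (pickP [pred p : V * V | e p.1 p.2]) => [[x y] /= exy | noEdge]; last first.
  by apply: fmatching_no_edges => // x y; have /= -> := noEdge (x, y).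
have IHdel a b f' : e a b -> f_optimal (del_edge e a b) f' D ->
    has_fmatching_saturating (del_edge e a b) f' D.
  move=> eab opt'; apply: (IH _ _ _ (del_edge_sym a b sym) (del_edge_irr a b irr) opt').
  by move: lt_n; rewrite (arcs_del_edge setT sym eab (edge_neq irr eab)) !inE; lia.
case: (pickP [pred p : V * V | [&& e p.1 p.2, p.1 \in D & p.2 \in D]]) =>
    [[a b] /and3P[eab aD bD] | noEdgeIn].
  exact: fmatching_del_edge (IHdel a b f eab (f_optimal_del_edge_in sym irr eab aD bD opt)).
case: (pickP [pred p : V * V | e p.1 p.2 && (f p.1 == 0)]) =>
    [[a b] /andP[eab /eqP fa0] | noZero].
  apply: fmatching_del_edge (IHdel a b f eab (f_optimal_del_edge_zero sym irr eab fa0 _ opt)).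
  by have := noEdgeIn (a, b); rewrite /= eab /= => ->.
have fpos a b : e a b -> 0 < f a.
  by move=> eab; have := noZero (a, b); rewrite /= eab /= lt0n => ->.
have use_edge a b : e a b -> a \notin D ->
    (b \in D -> forall X, f_tight e f D X -> (a \in X) || (b \in X)) ->
    has_fmatching_saturating e f D.
  move=> eab aD cover; have fb : 0 < f b by apply: (fpos b a); rewrite sym.
  apply: (fmatching_use_edge sym irr eab (fpos a b eab) fb).
  exact: IHdel (f_optimal_use_edge sym irr eab (fpos a b eab) fb aD cover opt).
case: (pickP [pred p : V * V | [&& e p.1 p.2, p.1 \notin D & p.2 \notin D]]) =>
    [[a b] /and3P[eab aD bD] | noEdgeOut].
  by apply: (use_edge a b) => //; rewrite (negbTE bD).
have cross : edges_cross e D.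
  move=> a b eab; have := noEdgeIn (a, b); have := noEdgeOut (a, b); rewrite /= eab.
  by case: (a \in D); case: (b \in D).
have [a [b0 [eab0 aD]]] : exists a b0, e a b0 /\ a \notin D.
  case xD: (x \in D); last by exists x, y; rewrite xD.
  by exists y, x; rewrite sym exy; have := cross x y exy; rewrite xD.
have [b [eab bD cover]] := tight_sets_meet_edge sym irr cross opt (fpos a b0 eab0) aD.
exact: (use_edge a b).
Qed.

End FactorsOfOptimalSets.

Theorem mainTheorem11 (V : finType) (e : rel V) (k : nat) (D : {set V}) :
  simple_graph e -> 1 <= k -> k_optimal e k D ->
  exists m : rel V,
    subgraph m e /\
    (forall v : V, deg m v <= k) /\
    (forall v : V, v \notin D -> deg m v = k).
Proof.
move=> [sym irr] _ [_ opt_phi].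
have opt : f_optimal e (fun=> k) D.
  move=> X; have := opt_phi X; rewrite /phi !wsum_const !arcs_induced_edges //.
  move=> /= le_phi; lia.
have [m [msym sub le_k eq_k]] := f_optimal_fmatching sym irr opt.
by exists m.
Qed.
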